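(* Let $m,n\in\mathbb{N}$, $m\ge2$, and $x_1,\dots,x_m\in(0,1)$. Suppose that $X_{(1)},\dots,X_{(m)}$ are independent random variables with $X_{(i)}\sim B(n,x_i)$ for $i=1,\dots,m$; that $S_{mn}^*\sim B(mn,\bar x)$ with $\bar x=\frac1m\sum_{i=1}^m x_i$; and that, for each $i=1,\dots,m$, $X_{(i),1},\dots,X_{(i),m}$ are independent random variables with $X_{(i),j}\sim B(n,x_i)$ for $j=1,\dots,m$. Then \begin{align*} X_{(1)}+\dots+X_{(m)}&\leqslant_{\mathrm{cx}} S_{mn}^*,\\ F_{S_{mn}^*}&\leqslant_{\mathrm{cx}}\tfrac1m\bigl[F_{X_{(1),1}+\dots+X_{(1),m}}+\dots+F_{X_{(m),1}+\dots+X_{(m),m}}\bigr],\\ F_{X_{(1)}+\dots+X_{(m)}}&\leqslant_{\mathrm{cx}}\tfrac1m\bigl[F_{X_{(1),1}+\dots+X_{(1),m}}+\dots+F_{X_{(m),1}+\dots+X_{(m),m}}\bigr]. \end{align*}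
   Context: $B(n,p)$ denotes the binomial distribution: $P(X=k)=\binom nk p^k(1-p)^{n-k}$, $k=0,\dots,n$. $F_X(t)=P(X<t)$. For distribution functions $G,H$ of probability measures with finite first moment, $G\leqslant_{\mathrm{cx}}H$ means $\int f\,dG\le\int f\,dH$ for all convex $f:\mathbb{R}\to\mathbb{R}$ for which the integrals exist; for random variables, $X\leqslant_{\mathrm{cx}}Y$ means $F_X\leqslant_{\mathrm{cx}}F_Y$. A convex combination of distribution functions is the distribution function of the corresponding mixture. *)

From Stdlib Require Import Reals Lra Lia List.
Import ListNotations.
Open Scope R_scope.

(* Probability mass functions of N-valued random variables, as functions nat -> R. *)

Definition binom_pmf (n : nat) (p : R) : nat -> R :=
  fun k => if Nat.leb k n then C n k * p ^ k * (1 - p) ^ (n - k) else 0.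

Definition dirac0 : nat -> R := fun k => if Nat.eqb k 0 then 1 else 0.

(* pmf of X+Y for independent X, Y with pmfs f, g (convolution) *)
Definition conv (f g : nat -> R) : nat -> R :=
  fun k => sum_f_R0 (fun i => f i * g (k - i)%nat) k.

Definition indep_sum (ps : list (nat -> R)) : nat -> R :=
  fold_right conv dirac0 ps.

Definition mixture (ps : list (nat -> R)) : nat -> R :=
  fun k => / INR (length ps) * fold_right (fun p acc => p k + acc) 0 ps.

Definition convex (f : R -> R) : Prop :=
  forall a b t, 0 <= t <= 1 -> f (t * a + (1 - t) * b) <= t * f a + (1 - t) * f b.

(* expectation of f(X) when X has pmf p supported in {0,...,N} *)
Definition expect (N : nat) (p : nat -> R) (f : R -> R) : R :=
  sum_f_R0 (fun k => p k * f (INR k)) N.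

Definition cx_le (N : nat) (p q : nat -> R) : Prop :=
  forall f : R -> R, convex f -> expect N p f <= expect N q f.

Definition sumR (l : list R) : R := fold_right Rplus 0 l.

(* All three laws are laws of sums of independent Bernoulli variables, so for a
   discretely convex h everything is a comparison of E h(B_1 + ... + B_N) as a
   function of the success probabilities. This function is symmetric and affine in
   each probability, and its mixed second difference in two of them is E of the
   second difference of h, hence nonnegative. The first inequality is Hoeffding's:
   moving two probabilities towards the mean at fixed sum increases E h, and
   finitely many such moves reach the constant vector. The second is Jensen's
   inequality for q |-> E h(B(mn, q)), which is convex by the same identity. *)

From Stdlib Require Import Reals Lra Lia List Permutation FunctionalExtensionality.
Import ListNotations.
Open Scope R_scope.

Definition is_prob (p : R) : Prop := 0 <= p <= 1.

Definition diff2 (h : nat -> R) (k : nat) : R := h (S (S k)) - 2 * h (S k) + h k.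

Definition discrete_convex (h : nat -> R) : Prop := forall k, 0 <= diff2 h k.

(* [pbinom_expect ps h] is E h(B_1 + ... + B_r) for independent B_i ~ B(1, p_i),
   where ps = [p_1; ...; p_r]; conditioning on B_1 gives the recursion. *)
Fixpoint pbinom_expect (ps : list R) (h : nat -> R) : R :=
  match ps with
  | [] => h 0%nat
  | p :: ps' => (1 - p) * pbinom_expect ps' h + p * pbinom_expect ps' (fun k => h (S k))
  end.

Lemma Forall_repeat {A} (P : A -> Prop) (x : A) n : P x -> Forall P (repeat x n).
Proof. intros Hx; induction n; simpl; constructor; auto. Qed.

Lemma pbinom_expect_ext ps u v : (forall k, u k = v k) -> pbinom_expect ps u = pbinom_expect ps v.
Proof. intros H; f_equal; apply functional_extensionality, H. Qed.

Lemma pbinom_expect_linear ps (u v : nat -> R) a b :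
  pbinom_expect ps (fun k => a * u k + b * v k) = a * pbinom_expect ps u + b * pbinom_expect ps v.
Proof.
  revert u v; induction ps as [|p ps IH]; intros u v; simpl; [ring|].
  rewrite (IH u v), (IH (fun k => u (S k)) (fun k => v (S k))); ring.
Qed.

Lemma pbinom_expect_nonneg ps h :
  Forall is_prob ps -> (forall k, 0 <= h k) -> 0 <= pbinom_expect ps h.
Proof.
  revert h; induction ps as [|p ps IH]; intros h Hps Hh; simpl; auto.
  inversion Hps as [|? ? [Hp0 Hp1] Hps']; subst.
  pose proof (IH h Hps' Hh); pose proof (IH (fun k => h (S k)) Hps' (fun k => Hh (S k))).
  apply Rplus_le_le_0_compat; apply Rmult_le_pos; lra.
Qed.

Lemma pbinom_expect_cons2 p q ps h :
  pbinom_expect (p :: q :: ps) h = pbinom_expect ps h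
    + (p + q) * (pbinom_expect ps (fun k => h (S k)) - pbinom_expect ps h)
    + p * q * pbinom_expect ps (diff2 h).
Proof.
  assert (E : pbinom_expect ps (diff2 h) = pbinom_expect ps (fun k => h (S (S k)))
              - 2 * pbinom_expect ps (fun k => h (S k)) + pbinom_expect ps h).
  { rewrite (pbinom_expect_ext ps _
      (fun k => 1 * (fun k => 1 * h (S (S k)) + (-2) * h (S k)) k + 1 * h k))
      by (intros; unfold diff2; ring).
    rewrite !pbinom_expect_linear; ring. }
  simpl; rewrite E; ring.
Qed.

Lemma pbinom_expect_perm ps ps' : Permutation ps ps' ->
  forall h, pbinom_expect ps h = pbinom_expect ps' h.
Proof.
  induction 1 as [| p ps ps' _ IH | p q ps | ps ps' ps'' _ IH1 _ IH2]; intros h.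
  - reflexivity.
  - simpl; rewrite IH, (IH (fun k => h (S k))); reflexivity.
  - rewrite !pbinom_expect_cons2; ring.
  - rewrite IH1; auto.
Qed.

Lemma pbinom_expect_app ps qs h :
  pbinom_expect (ps ++ qs) h = pbinom_expect ps (fun i => pbinom_expect qs (fun j => h (i + j)%nat)).
Proof. revert h; induction ps as [|p ps IH]; intros h; simpl; [reflexivity|]; rewrite !IH; reflexivity. Qed.

(* Bringing two success probabilities together at fixed sum raises their product,
   and E h can only grow when h has nonnegative second differences. *)
Lemma pbinom_expect_cons2_le p q p' q' ps h :
  Forall is_prob ps -> discrete_convex h ->
  p + q = p' + q' -> p * q <= p' * q' ->
  pbinom_expect (p :: q :: ps) h <= pbinom_expect (p' :: q' :: ps) h.
Proof.
  intros Hps Hh Hs Hq; rewrite !pbinom_expect_cons2, Hs.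
  pose proof (pbinom_expect_nonneg ps (diff2 h) Hps Hh); nra.
Qed.
Lemma sumR_cons a l : sumR (a :: l) = a + sumR l.
Proof. reflexivity. Qed.

Lemma sumR_app l1 l2 : sumR (l1 ++ l2) = sumR l1 + sumR l2.
Proof. induction l1; simpl; [ring|]; rewrite IHl1; ring. Qed.

Lemma sumR_perm l l' : Permutation l l' -> sumR l = sumR l'.
Proof. induction 1; simpl; lra. Qed.

Lemma sumR_repeat y n : sumR (repeat y n) = INR n * y.
Proof. induction n; simpl repeat; [simpl; ring|]; simpl sumR; rewrite IHn, S_INR; ring. Qed.

Lemma sumR_prob_bounds ps : Forall is_prob ps -> 0 <= sumR ps <= INR (length ps).
Proof.
  induction 1 as [|p ps [Hp0 Hp1] _ IH]; simpl sumR; [simpl; lra|].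
  cbn [length]; rewrite S_INR; lra.
Qed.

Lemma exists_le_mean mu ps : ps <> [] -> sumR ps <= INR (length ps) * mu ->
  exists a, In a ps /\ a <= mu.
Proof.
  induction ps as [|y ps IH]; intros Hne Hs; [congruence|].
  destruct (Rle_dec y mu) as [Hy|Hy]; [exists y; simpl; auto|].
  destruct ps as [|z ps]; [cbn in Hs; lra|].
  destruct IH as [a [Ha Ham]]; [congruence| |exists a; simpl in *; tauto].
  rewrite sumR_cons in Hs; cbn [length] in *; rewrite S_INR in Hs; lra.
Qed.

Lemma exists_ge_mean mu ps : ps <> [] -> INR (length ps) * mu <= sumR ps ->
  exists b, In b ps /\ mu <= b.
Proof.
  induction ps as [|y ps IH]; intros Hne Hs; [congruence|].
  destruct (Rle_dec mu y) as [Hy|Hy]; [exists y; simpl; auto|].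
  destruct ps as [|z ps]; [cbn in Hs; lra|].
  destruct IH as [b [Hb Hbm]]; [congruence| |exists b; simpl in *; tauto].
  rewrite sumR_cons in Hs; cbn [length] in *; rewrite S_INR in Hs; lra.
Qed.

Lemma in_perm_cons {A} (a : A) l : In a l -> exists l', Permutation l (a :: l').
Proof.
  intros Ha; destruct (in_split _ _ Ha) as [l1 [l2 ->]].
  exists (l1 ++ l2); apply Permutation_sym, Permutation_middle.
Qed.

(* One step of Hoeffding's argument: with a <= mu <= b among the p_i, replacing
   (a, b) by (mu, a + b - mu) keeps the sum and, by [pbinom_expect_cons2_le], does not
   decrease E h. *)
Lemma pbinom_expect_pull_mean ps L mu :
  Forall is_prob ps -> length ps = S L -> sumR ps = INR (S L) * mu ->
  exists rest, Forall is_prob rest /\ length rest = L /\ sumR rest = INR L * mu /\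
    forall h, discrete_convex h -> pbinom_expect ps h <= pbinom_expect (mu :: rest) h.
Proof.
  intros Hps Hl Hs.
  assert (Hne : ps <> []) by (intros ->; discriminate).
  destruct (exists_le_mean mu ps Hne) as [a [Ha Ham]]; [rewrite Hl; lra|].
  destruct (in_perm_cons a ps Ha) as [ps1 P1].
  pose proof (Permutation_length P1) as L1; pose proof (sumR_perm _ _ P1) as S1.
  pose proof (Permutation_Forall P1 Hps) as [Fa F1']%Forall_cons_iff.
  assert (L1' : length ps1 = L) by (cbn in L1; lia); clear L1; rewrite sumR_cons in S1; rewrite S_INR, Rmult_plus_distr_r, Rmult_1_l in Hs.
  destruct ps1 as [|b0 ps0].
  - assert (L = 0)%nat as -> by (simpl in L1'; lia).
    assert (a = mu) as -> by (simpl in Hs, S1; lra).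
    exists []; repeat split; auto; [simpl; lra|].
    intros h _; rewrite (pbinom_expect_perm _ _ P1); lra.
  - destruct (exists_ge_mean mu (b0 :: ps0)) as [b [Hb Hbm]]; [congruence|rewrite L1'; lra|].
    destruct (in_perm_cons b _ Hb) as [ps2 P2].
    pose proof (Permutation_length P2) as L2; pose proof (sumR_perm _ _ P2) as S2.
    pose proof (Permutation_Forall P2 F1') as [Fb F2']%Forall_cons_iff.
    rewrite sumR_cons in S1; rewrite !sumR_cons in S2; cbn [length] in L1', L2.
    exists ((a + b - mu) :: ps2); rewrite sumR_cons; cbn [length]; repeat split.
    + constructor; [unfold is_prob in *; lra | exact F2'].
    + lia.
    + lra.
    + intros h Hh.
      rewrite (pbinom_expect_perm _ _ (perm_trans P1 (perm_skip a P2))).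
      apply pbinom_expect_cons2_le; auto; [ring|nra].
Qed.

Lemma pbinom_expect_le_binom L ps mu h :
  length ps = L -> Forall is_prob ps -> sumR ps = INR L * mu -> discrete_convex h ->
  pbinom_expect ps h <= pbinom_expect (repeat mu L) h.
Proof.
  revert ps h; induction L as [|L IH]; intros ps h Hl Hps Hs Hh.
  - destruct ps; [simpl; lra|discriminate].
  - assert (Hmu : is_prob mu).
    { pose proof (sumR_prob_bounds ps Hps) as B; rewrite Hl, Hs, S_INR in B.
      pose proof (pos_INR L); split; nra. }
    destruct (pbinom_expect_pull_mean ps L mu Hps Hl Hs) as [rest [Hr [Lr [Sr Hle]]]].
    apply (Rle_trans _ _ _ (Hle h Hh)); simpl.
    pose proof (IH rest h Lr Hr Sr Hh).
    pose proof (IH rest (fun k => h (S k)) Lr Hr Sr (fun k => Hh (S k))).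
    destruct Hmu; nra.
Qed.

Lemma discrete_convex_chord (V : nat -> R) N :
  (forall j, (j + 2 <= N)%nat -> 2 * V (S j) <= V j + V (S (S j))) ->
  forall j, (j <= N)%nat -> INR N * V j <= INR j * V N + INR (N - j) * V 0%nat.
Proof.
  intros Hc.
  set (U := fun j => V j - V 0%nat).
  (* the slopes U j / j are nondecreasing *)
  assert (Hslope : forall j, (j + 1 <= N)%nat -> INR (S j) * U j <= INR j * U (S j)).
  { induction j as [|j IH]; intros Hj; [unfold U; simpl; lra|].
    pose proof (IH ltac:(lia)); pose proof (Hc j ltac:(lia)); pose proof (pos_INR j).
    unfold U in *; rewrite !S_INR in *; nra. }
  assert (Hend : forall k j, (j + k = N)%nat -> INR N * U j <= INR j * U N).
  { induction k as [|k IH]; intros j Hj; [replace j with N by lia; lra|].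
    pose proof (IH (S j) ltac:(lia)); pose proof (Hslope j ltac:(lia)).
    rewrite S_INR in *; pose proof (pos_INR j); pose proof (pos_INR N).
    assert (INR N * (INR j + 1) * U j <= INR j * (INR j + 1) * U N) by nra.
    nra. }
  intros j Hj; pose proof (Hend (N - j)%nat j ltac:(lia)) as H; unfold U in H.
  rewrite minus_INR by lia; nra.
Qed.

(* Write c = t a + (1 - t) b and
   V j = E h for j copies of a and N - j copies of b. By [pbinom_expect_cons2],
   j |-> V j is convex; expanding each copy of c affinely gives a binomial(N, t)
   average of the V j, which is bounded by the chord t V N + (1 - t) V 0. *)
Section BinomConvex.

Variables (a b t : R) (h : nat -> R) (N : nat).
Hypotheses (Hh : discrete_convex h) (Ht : 0 <= t <= 1) (Ha : is_prob a) (Hb : is_prob b).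

Let W (i r : nat) : R := pbinom_expect (repeat a i ++ repeat b r) h.
Let V (j : nat) : R := W j (N - j).

Lemma W_convex j r : 2 * W (S j) (S r) <= W j (S (S r)) + W (S (S j)) r.
Proof.
  unfold W; set (ps := repeat a j ++ repeat b r).
  assert (Pbb : Permutation (repeat a j ++ repeat b (S (S r))) (b :: b :: ps)).
  { simpl; unfold ps; eapply perm_trans; [apply Permutation_sym, Permutation_middle|].
    apply perm_skip, Permutation_sym, Permutation_middle. }
  assert (Pab : Permutation (repeat a (S j) ++ repeat b (S r)) (a :: b :: ps)).
  { simpl; apply perm_skip, Permutation_sym, Permutation_middle. }
  rewrite (pbinom_expect_perm _ _ Pbb), (pbinom_expect_perm _ _ Pab).
  change (repeat a (S (S j)) ++ repeat b r) with (a :: a :: ps).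
  rewrite !pbinom_expect_cons2.
  assert (0 <= pbinom_expect ps (diff2 h)).
  { apply pbinom_expect_nonneg; [apply Forall_app; split; apply Forall_repeat|]; auto. }
  assert (0 <= (a - b) * (a - b) * pbinom_expect ps (diff2 h))
    by (apply Rmult_le_pos; [apply Rle_0_sqr|auto]).
  nra.
Qed.

Lemma V_chord j : (j <= N)%nat -> INR N * V j <= INR j * V N + INR (N - j) * V 0%nat.
Proof.
  apply discrete_convex_chord; intros i Hi; unfold V.
  replace (N - i)%nat with (S (S (N - S (S i)))) by lia.
  replace (N - S i)%nat with (S (N - S (S i))) by lia.
  apply W_convex.
Qed.

Lemma pbinom_expect_mix_le k j r : (k + j + r = N)%nat ->
  INR N * pbinom_expect (repeat (t * a + (1 - t) * b) k ++ repeat a j ++ repeat b r) h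
  <= INR N * V 0%nat + (INR j + INR k * t) * (V N - V 0%nat).
Proof.
  revert j r; induction k as [|k IH]; intros j r Hk.
  - pose proof (V_chord j ltac:(lia)) as Hc; unfold V in Hc |- *.
    replace (N - j)%nat with r in Hc by lia.
    assert (E : INR N = INR j + INR r) by (rewrite <- plus_INR; f_equal; lia).
    rewrite Nat.sub_0_r, Nat.sub_diag in *; simpl repeat in *; simpl app in *.
    unfold W in *; rewrite E in Hc |- *; simpl (INR 0); lra.
  - set (c := t * a + (1 - t) * b).
    assert (Pa : Permutation (a :: repeat c k ++ repeat a j ++ repeat b r)
                             (repeat c k ++ repeat a (S j) ++ repeat b r))
      by apply Permutation_middle.
    assert (Pb : Permutation (b :: repeat c k ++ repeat a j ++ repeat b r)
                             (repeat c k ++ repeat a j ++ repeat b (S r)))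
      by (rewrite !app_assoc; apply Permutation_middle).
    replace (pbinom_expect (repeat c (S k) ++ repeat a j ++ repeat b r) h)
      with (t * pbinom_expect (a :: repeat c k ++ repeat a j ++ repeat b r) h
            + (1 - t) * pbinom_expect (b :: repeat c k ++ repeat a j ++ repeat b r) h)
      by (simpl; unfold c; ring).
    rewrite (pbinom_expect_perm _ _ Pa), (pbinom_expect_perm _ _ Pb).
    pose proof (Rmult_le_compat_l t _ _ ltac:(lra) (IH (S j) r ltac:(lia))).
    pose proof (Rmult_le_compat_l (1 - t) _ _ ltac:(lra) (IH j (S r) ltac:(lia))).
    unfold c in *; rewrite !S_INR in *; lra.
Qed.

Lemma binom_pbinom_expect_convex :
  pbinom_expect (repeat (t * a + (1 - t) * b) N) h
  <= t * pbinom_expect (repeat a N) h + (1 - t) * pbinom_expect (repeat b N) h.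
Proof.
  destruct (Nat.eq_dec N 0) as [HN|HN]; [rewrite HN; simpl; lra|].
  pose proof (pbinom_expect_mix_le N 0 0 ltac:(lia)) as M.
  unfold V, W in M; rewrite Nat.sub_diag, Nat.sub_0_r in M.
  simpl repeat in M; rewrite !app_nil_r in M; cbn [app] in M; simpl (INR 0) in M.
  assert (0 < INR N) by (apply lt_0_INR; lia).
  apply Rmult_le_reg_l with (INR N); auto; lra.
Qed.

End BinomConvex.

Definition mean (l : list R) : R := / INR (length l) * sumR l.

Lemma mean_is_prob l : l <> [] -> Forall is_prob l -> is_prob (mean l).
Proof.
  intros Hne Hl; pose proof (sumR_prob_bounds l Hl) as [H0 H1].
  assert (0 < INR (length l)) by (destruct l; [congruence|apply lt_0_INR; simpl; lia]).
  unfold mean; split; [apply Rmult_le_pos; [left; apply Rinv_0_lt_compat|]; lra|].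
  apply Rmult_le_reg_l with (INR (length l)); auto.
  rewrite <- Rmult_assoc, Rinv_r; lra.
Qed.

Lemma jensen_mean (g : R -> R) :
  (forall a b t, is_prob a -> is_prob b -> 0 <= t <= 1 ->
     g (t * a + (1 - t) * b) <= t * g a + (1 - t) * g b) ->
  forall l, l <> [] -> Forall is_prob l -> g (mean l) <= mean (map g l).
Proof.
  intros Hg l; induction l as [|y l IH]; intros Hne Hl; [congruence|].
  apply Forall_cons_iff in Hl as [Hy Hl].
  destruct l as [|z l']; [unfold mean; simpl; replace (/ 1 * (y + 0)) with y by field; lra|].
  set (l := z :: l') in *.
  pose proof (IH ltac:(discriminate) Hl) as IH'.
  pose proof (mean_is_prob l ltac:(discriminate) Hl) as Hm.
  assert (HL : 0 < INR (length l)) by (apply lt_0_INR; simpl; lia).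
  (* mean (y :: l) = t y + (1 - t) mean l with t = 1 / (|l| + 1) *)
  set (t := / (INR (length l) + 1)).
  assert (Ht : 0 <= t <= 1).
  { unfold t; split; [left; apply Rinv_0_lt_compat; lra|].
    rewrite <- Rinv_1; apply Rinv_le_contravar; lra. }
  unfold mean in *; rewrite length_map in *; cbn [length map]; rewrite !sumR_cons, S_INR.
  fold t; replace (t * (y + sumR l)) with (t * y + (1 - t) * (/ INR (length l) * sumR l))
    by (unfold t; field; lra).
  eapply Rle_trans; [apply Hg; auto|].
  replace (t * (g y + sumR (map g l)))
    with (t * g y + (1 - t) * (/ INR (length l) * sumR (map g l))) by (unfold t; field; lra).
  apply Rplus_le_compat_l, Rmult_le_compat_l; lra.
Qed.

Definition expect_nat (M : nat) (p h : nat -> R) : R := sum_f_R0 (fun k => p k * h k) M.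

Definition supported_in (p : nat -> R) (K : nat) : Prop := forall k, (K < k)%nat -> p k = 0.

Lemma sum_f_R0_trunc F K M : (K <= M)%nat -> (forall k, (K < k <= M)%nat -> F k = 0) ->
  sum_f_R0 F M = sum_f_R0 F K.
Proof.
  induction M as [|M IH]; intros HKM HF; [replace K with 0%nat by lia; reflexivity|].
  destruct (Nat.eq_dec K (S M)) as [->|HK]; [reflexivity|].
  rewrite tech5, IH, (HF (S M)) by (intros; try apply HF; lia); ring.
Qed.

Lemma expect_nat_trunc p K M h : supported_in p K -> (K <= M)%nat ->
  expect_nat M p h = expect_nat K p h.
Proof.
  intros Hp HKM; apply sum_f_R0_trunc; auto.
  intros k Hk; rewrite Hp by lia; ring.
Qed.

Lemma sum_f_R0_antidiagonal (F : nat -> nat -> R) M :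
  sum_f_R0 (fun k => sum_f_R0 (fun i => F i (k - i)%nat) k) M =
  sum_f_R0 (fun i => sum_f_R0 (fun j => F i j) (M - i)) M.
Proof.
  induction M as [|M IH]; [reflexivity|].
  rewrite (tech5 (fun k => sum_f_R0 (fun i => F i (k - i)%nat) k)), IH.
  rewrite (tech5 (fun i => sum_f_R0 (fun j => F i j) (S M - i))), Nat.sub_diag.
  rewrite (sum_eq (fun i => sum_f_R0 (fun j => F i j) (S M - i))
                  (fun i => sum_f_R0 (fun j => F i j) (M - i) + F i (S M - i)%nat)).
  2:{ intros i Hi; replace (S M - i)%nat with (S (M - i)) by lia; rewrite tech5.
      replace (S (M - i)) with (S M - i)%nat by lia; reflexivity. }
  rewrite plus_sum, (tech5 (fun i => F i (S M - i)%nat)), Nat.sub_diag; simpl; ring.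
Qed.

Lemma conv_supported p q A B : supported_in p A -> supported_in q B -> supported_in (conv p q) (A + B).
Proof.
  intros Hp Hq k Hk; apply sum_eq_R0; intros i Hi.
  destruct (Compare_dec.le_lt_dec i A); [rewrite Hq by lia|rewrite Hp by lia]; ring.
Qed.

Lemma expect_nat_conv p q A B M h : supported_in p A -> supported_in q B -> (A + B <= M)%nat ->
  expect_nat M (conv p q) h = expect_nat A p (fun i => expect_nat B q (fun j => h (i + j)%nat)).
Proof.
  intros Hp Hq HM; unfold expect_nat, conv.
  rewrite (sum_eq _ (fun k => sum_f_R0 (fun i => (fun i j => p i * q j * h (i + j)%nat) i (k - i)%nat) k)).
  2:{ intros k Hk; rewrite <- (Rmult_comm (h k)), scal_sum; apply sum_eq; intros i Hi.
      simpl; replace (i + (k - i))%nat with k by lia; ring. }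
  rewrite (sum_f_R0_antidiagonal (fun i j => p i * q j * h (i + j)%nat)); cbv beta.
  rewrite (sum_f_R0_trunc _ A) by (try lia; intros k Hk;
    apply sum_eq_R0; intros; rewrite Hp by lia; ring).
  apply sum_eq; intros i Hi; rewrite scal_sum.
  rewrite (sum_f_R0_trunc _ B) by (try lia; intros; rewrite Hq by lia; ring).
  apply sum_eq; intros; ring.
Qed.

Lemma C_n_0 n : C n 0 = 1.
Proof. unfold C; rewrite Nat.sub_0_r; simpl; field; apply INR_fact_neq_0. Qed.

Lemma C_n_n n : C n n = 1.
Proof. unfold C; rewrite Nat.sub_diag; simpl; field; apply INR_fact_neq_0. Qed.

Lemma binom_supported n p : supported_in (binom_pmf n p) n.
Proof. intros k Hk; unfold binom_pmf; destruct (Nat.leb_spec k n); [lia|reflexivity]. Qed.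

Lemma binom_pmf_S n p k : (k <= S n)%nat ->
  binom_pmf (S n) p k = (1 - p) * binom_pmf n p k +
    match k with 0%nat => 0 | S k' => p * binom_pmf n p k' end.
Proof.
  intros Hk; unfold binom_pmf; destruct k as [|k].
  - simpl Nat.leb; rewrite !C_n_0, !Nat.sub_0_r; simpl; ring.
  - destruct (Nat.leb_spec (S k) (S n)), (Nat.leb_spec k n); try lia.
    destruct (Nat.leb_spec (S k) n).
    + rewrite <- pascal by lia.
      replace (S n - S k)%nat with (S (n - S k)) by lia.
      replace (n - k)%nat with (S (n - S k)) by lia; simpl; ring.
    + replace k with n by lia; rewrite !C_n_n, !Nat.sub_diag; simpl; ring.
Qed.

Lemma expect_nat_binom_S n p h :
  expect_nat (S n) (binom_pmf (S n) p) h = (1 - p) * expect_nat n (binom_pmf n p) h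
    + p * expect_nat n (binom_pmf n p) (fun k => h (S k)).
Proof.
  unfold expect_nat.
  rewrite (sum_eq _ (fun k => (1 - p) * binom_pmf n p k * h k +
     (match k with 0%nat => 0 | S k' => p * binom_pmf n p k' end) * h k))
    by (intros i Hi; rewrite binom_pmf_S by lia; ring).
  rewrite plus_sum, tech5, (binom_supported n p (S n)) by lia.
  rewrite (decomp_sum (fun k => (match k with 0%nat => 0 | S k' => p * binom_pmf n p k' end) * h k))
    by lia; simpl pred.
  rewrite !scal_sum; f_equal.
  - rewrite Rmult_0_r, Rmult_0_l, Rplus_0_r; apply sum_eq; intros; ring.
  - rewrite Rmult_0_l, Rplus_0_l; apply sum_eq; intros; ring.
Qed.

Lemma expect_nat_binom n p h : expect_nat n (binom_pmf n p) h = pbinom_expect (repeat p n) h.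
Proof.
  revert h; induction n as [|n IH]; intros h.
  - unfold expect_nat, binom_pmf; simpl; rewrite C_n_0; ring.
  - rewrite expect_nat_binom_S, !IH; reflexivity.
Qed.

Lemma indep_binom_supported n qs : supported_in (indep_sum (map (binom_pmf n) qs)) (n * length qs).
Proof.
  induction qs as [|q qs IH]; simpl.
  - intros [|k] Hk; [lia|reflexivity].
  - replace (n * S (length qs))%nat with (n + n * length qs)%nat by lia.
    apply conv_supported; auto using binom_supported.
Qed.

Definition blocks (n : nat) (qs : list R) : list R := concat (map (fun q => repeat q n) qs).

Lemma expect_nat_indep_binom n qs M h : (n * length qs <= M)%nat ->
  expect_nat M (indep_sum (map (binom_pmf n) qs)) h = pbinom_expect (blocks n qs) h.
Proof.
  unfold blocks; revert M h; induction qs as [|q qs IH]; intros M h HM; simpl.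
  - rewrite (expect_nat_trunc dirac0 0) by (lia || (intros [|k] Hk; [lia|reflexivity])).
    unfold expect_nat, dirac0; simpl; ring.
  - rewrite (expect_nat_conv _ _ n (n * length qs));
      [|apply binom_supported|apply indep_binom_supported|simpl in HM; lia].
    rewrite pbinom_expect_app, <- expect_nat_binom.
    f_equal; apply functional_extensionality; intros i; apply IH; lia.
Qed.

Lemma expect_nat_mixture ps M h :
  expect_nat M (mixture ps) h = mean (map (fun p => expect_nat M p h) ps).
Proof.
  unfold expect_nat, mixture, mean; rewrite length_map.
  rewrite (sum_eq _ (fun k => fold_right (fun p acc => p k + acc) 0 ps * h k * / INR (length ps)))
    by (intros; ring).
  rewrite <- (scal_sum _ M (/ INR (length ps))); f_equal.
  induction ps as [|p ps IH]; simpl.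
  - apply sum_eq_R0; intros; ring.
  - rewrite <- IH, <- plus_sum; apply sum_eq; intros; ring.
Qed.

Lemma blocks_repeat (y : R) n m : blocks n (repeat y m) = repeat y (m * n).
Proof. unfold blocks; induction m; simpl; auto; rewrite IHm, repeat_app; reflexivity. Qed.

Lemma length_blocks n qs : length (blocks n qs) = (n * length qs)%nat.
Proof. unfold blocks; induction qs; simpl; [lia|]; rewrite length_app, repeat_length, IHqs; lia. Qed.

Lemma sumR_blocks n qs : sumR (blocks n qs) = INR n * sumR qs.
Proof.
  unfold blocks; induction qs; simpl; [ring|].
  rewrite sumR_app, IHqs, sumR_repeat; ring.
Qed.

Lemma blocks_prob n qs : Forall is_prob qs -> Forall is_prob (blocks n qs).
Proof.
  unfold blocks; induction 1; simpl; auto.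
  apply Forall_app; split; auto; apply Forall_repeat; auto.
Qed.

Lemma convex_discrete_convex f : convex f -> discrete_convex (fun k => f (INR k)).
Proof.
  intros Hf k; unfold diff2.
  pose proof (Hf (INR k) (INR (S (S k))) (/ 2) ltac:(lra)) as H.
  replace (/ 2 * INR k + (1 - / 2) * INR (S (S k))) with (INR (S k)) in H
    by (rewrite !S_INR; field).
  lra.
Qed.

Lemma cx_le_intro N p q :
  (forall h, discrete_convex h -> expect_nat N p h <= expect_nat N q h) -> cx_le N p q.
Proof. intros H f Hf; apply H, convex_discrete_convex, Hf. Qed.

Lemma cx_le_trans N p q r : cx_le N p q -> cx_le N q r -> cx_le N p r.
Proof. intros Hpq Hqr f Hf; eapply Rle_trans; [apply Hpq|apply Hqr]; auto. Qed.

Lemma cx_le_indep_binom_binom n xs : Forall is_prob xs ->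
  cx_le (length xs * n) (indep_sum (map (binom_pmf n) xs))
        (binom_pmf (length xs * n) (mean xs)).
Proof.
  intros Hxs; apply cx_le_intro; intros h Hh.
  rewrite expect_nat_indep_binom, expect_nat_binom by lia.
  apply pbinom_expect_le_binom; auto using blocks_prob.
  - rewrite length_blocks; lia.
  - destruct xs as [|x0 xs]; [unfold blocks, mean; simpl; ring|].
    assert (0 < INR (length (x0 :: xs))) by (apply lt_0_INR; simpl; lia).
    unfold mean; rewrite sumR_blocks, mult_INR; field; lra.
Qed.

Lemma cx_le_binom_mixture n xs : xs <> [] -> Forall is_prob xs ->
  cx_le (length xs * n) (binom_pmf (length xs * n) (mean xs))
        (mixture (map (fun q => indep_sum (repeat (binom_pmf n q) (length xs))) xs)).
Proof.
  intros Hne Hxs; apply cx_le_intro; intros h Hh; set (N := (length xs * n)%nat).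
  rewrite expect_nat_binom, expect_nat_mixture, map_map.
  rewrite (map_ext _ (fun q => pbinom_expect (repeat q N) h)).
  2:{ intros q; rewrite <- map_repeat, expect_nat_indep_binom, blocks_repeat
        by (rewrite repeat_length; unfold N; lia); reflexivity. }
  apply (jensen_mean (fun q => pbinom_expect (repeat q N) h)); auto.
  intros a b t Ha Hb Ht; apply binom_pbinom_expect_convex; auto.
Qed.

Theorem proposition3 (m n : nat) (x : nat -> R)
  (hm : (2 <= m)%nat)
  (hx : forall i, (1 <= i <= m)%nat -> 0 < x i < 1) :
  let N := (m * n)%nat in
  let xbar := / INR m * sumR (map x (seq 1 m)) in
  let S_indep := indep_sum (map (fun i => binom_pmf n (x i)) (seq 1 m)) in
  let S_star := binom_pmf (m * n) xbar in
  let Mix := mixture (map (fun i => indep_sum (repeat (binom_pmf n (x i)) m)) (seq 1 m)) in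
  cx_le N S_indep S_star /\ cx_le N S_star Mix /\ cx_le N S_indep Mix.
Proof.
  intros N xbar S_indep S_star Mix.
  set (xs := map x (seq 1 m)).
  assert (Hlen : length xs = m) by (unfold xs; rewrite length_map, length_seq; reflexivity).
  assert (Hxs : Forall is_prob xs).
  { apply Forall_forall; intros y [i [<- Hi%in_seq]]%in_map_iff.
    pose proof (hx i ltac:(lia)); unfold is_prob; lra. }
  assert (Hne : xs <> []) by (intros E; rewrite E in Hlen; simpl in Hlen; lia).
  pose proof (cx_le_indep_binom_binom n xs Hxs) as H1.
  pose proof (cx_le_binom_mixture n xs Hne Hxs) as H2.
  unfold mean in H1, H2; rewrite Hlen in H1, H2; unfold xs in H1, H2; rewrite !map_map in H1, H2.
  split; [|split]; auto; apply cx_le_trans with S_star; auto.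
Qed.
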